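(* Let $n\ge1$, let $L_1,L_2,\underline b>0$ and let $y^*\in\mathbb{R}^n$. Let $\mathcal{F}_{L_1,L_2,\underline b,y^*}$ be the set of all $f\in C^1(\mathbb{R}^{3n},\mathbb{R}^n)$, $f=f(x_1,x_2,u)$, such that $f(y^*,0,0)=0$ and for all $x_1,x_2,u\in\mathbb{R}^n$: $\left\|\frac{\partial f}{\partial x_1}\right\|\le L_1$, $\left\|\frac{\partial f}{\partial x_2}\right\|\le L_2$, $\mathrm{Sym}\left[\frac{\partial f}{\partial u}\right]\ge\underline b I_n$. Let $$\Omega_{pd}=\left\{(k_p,k_d)\in(0,\infty)^2\;:\; k_p^2>\bar k,\ \ k_d^2>k_p/\underline b+\bar k\right\},\qquad \bar k=(L_1+L_2)(k_p+k_d)/\underline b.$$ Consider the closed-loop system $\dot x_1=x_2$, $\dot x_2=f(x_1,x_2,u)$ with $u(t)=k_pe(t)+k_d\dot e(t)$, $e(t)=y^*-x_1(t)$. Then for any $(k_p,k_d)\in\Omega_{pd}$ there exist constants $M>0$ and $\lambda>0$, depending only on $(k_p,k_d,L_1,L_2,\underline b)$, such that for all $f\in\mathcal{F}_{L_1,L_2,\underline b,y^*}$ and all initial states $(x_1(0),x_2(0))\in\mathbb{R}^{2n}$, $$\|e(t)\|+\|\dot e(t)\|\le Me^{-\lambda t}\left(\|e(0)\|+\|\dot e(0)\|\right)\quad\text{for all } t\ge0.$$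
   Context: $\|\cdot\|$ denotes the Euclidean norm of vectors and the induced operator norm of matrices. For a square matrix $P$, $\mathrm{Sym}[P]=(P+P^{\mathsf T})/2$. For symmetric matrices, $S_1\ge S_2$ means $S_1-S_2$ is positive semidefinite. $\frac{\partial f}{\partial x_1},\frac{\partial f}{\partial x_2},\frac{\partial f}{\partial u}$ denote the $n\times n$ Jacobian matrices of $f$ with respect to $x_1,x_2,u$; $I_n$ is the identity matrix. *)

From HB Require Import structures.
From mathcomp Require Import all_boot all_order all_algebra.
From mathcomp Require Import all_classical all_reals all_analysis.
Set Implicit Arguments. Unset Strict Implicit. Unset Printing Implicit Defensive.
Import Order.TTheory GRing.Theory Num.Theory.
Import numFieldNormedType.Exports.
Local Open Scope classical_set_scope.
Local Open Scope ring_scope.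

Definition enorm (R : realType) (n : nat) (v : 'cV[R]_n) : R :=
  Num.sqrt (\sum_(i < n) v i 0 ^+ 2).

Definition opnorm (R : realType) (n : nat) (A : 'M[R]_n) : R :=
  sup [set enorm (A *m v) | v in [set v : 'cV[R]_n | enorm v <= 1]].

Definition symm (R : realType) (n : nat) (P : 'M[R]_n) : 'M[R]_n :=
  2^-1 *: (P + P^T).

Definition psd (R : realType) (n : nat) (S : 'M[R]_n) : Prop :=
  forall v : 'cV[R]_n, 0 <= (v^T *m S *m v) 0 0.
Definition loewner_ge (R : realType) (n : nat) (S1 S2 : 'M[R]_n) : Prop :=
  psd (S1 - S2).

(* f = f(x1,x2,u) viewed as a map on R^{3n} = R^n x R^n x R^n *)
Definition uncurry3 (R : realType) (n : nat)
  (f : 'cV[R]_n -> 'cV[R]_n -> 'cV[R]_n -> 'cV[R]_n)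
  (p : 'cV[R]_n * 'cV[R]_n * 'cV[R]_n) : 'cV[R]_n :=
  f p.1.1 p.1.2 p.2.

Definition evec (R : realType) (n : nat) (j : 'I_n) : 'cV[R]_n := delta_mx j 0.

Definition jac_x1 (R : realType) (n : nat)
  (f : 'cV[R]_n -> 'cV[R]_n -> 'cV[R]_n -> 'cV[R]_n)
  (p : 'cV[R]_n * 'cV[R]_n * 'cV[R]_n) : 'M[R]_n :=
  \matrix_(i < n, j < n) (derive (uncurry3 f) p ((evec R j, 0), 0)) i 0.
Definition jac_x2 (R : realType) (n : nat)
  (f : 'cV[R]_n -> 'cV[R]_n -> 'cV[R]_n -> 'cV[R]_n)
  (p : 'cV[R]_n * 'cV[R]_n * 'cV[R]_n) : 'M[R]_n :=
  \matrix_(i < n, j < n) (derive (uncurry3 f) p ((0, evec R j), 0)) i 0.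
Definition jac_u (R : realType) (n : nat)
  (f : 'cV[R]_n -> 'cV[R]_n -> 'cV[R]_n -> 'cV[R]_n)
  (p : 'cV[R]_n * 'cV[R]_n * 'cV[R]_n) : 'M[R]_n :=
  \matrix_(i < n, j < n) (derive (uncurry3 f) p ((0, 0), evec R j)) i 0.

Definition C1 (R : realType) (n : nat)
  (f : 'cV[R]_n -> 'cV[R]_n -> 'cV[R]_n -> 'cV[R]_n) : Prop :=
  (forall p, differentiable (uncurry3 f) p) /\
  (forall i j : 'I_n,
     continuous (fun p => jac_x1 f p i j) /\
     continuous (fun p => jac_x2 f p i j) /\
     continuous (fun p => jac_u f p i j)).

Definition fclass (R : realType) (n : nat) (L1 L2 b : R) (ystar : 'cV[R]_n)
  (f : 'cV[R]_n -> 'cV[R]_n -> 'cV[R]_n -> 'cV[R]_n) : Prop :=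
  C1 f /\ f ystar 0 0 = 0 /\
  (forall x1 x2 u : 'cV[R]_n,
     opnorm (jac_x1 f (x1, x2, u)) <= L1 /\
     opnorm (jac_x2 f (x1, x2, u)) <= L2 /\
     loewner_ge (symm (jac_u f (x1, x2, u))) (b *: 1%:M)).

Definition kbar (R : realType) (L1 L2 b kp kd : R) : R :=
  (L1 + L2) * (kp + kd) / b.
Definition Omega_pd (R : realType) (L1 L2 b kp kd : R) : Prop :=
  0 < kp /\ 0 < kd /\ kbar L1 L2 b kp kd < kp ^+ 2 /\
  kp / b + kbar L1 L2 b kp kd < kd ^+ 2.

(* (x1, x2) is a solution on [0, +oo) of the PD closed loop
   x1' = x2, x2' = f(x1, x2, u), u = kp e + kd e', e = y* - x1
   (so e' = - x1' = - x2). *)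
Definition pd_solution (R : realType) (n : nat) (kp kd : R) (ystar : 'cV[R]_n)
  (f : 'cV[R]_n -> 'cV[R]_n -> 'cV[R]_n -> 'cV[R]_n)
  (x1 x2 : R -> 'cV[R]_n) : Prop :=
  {within [set t : R | 0 <= t], continuous x1} /\
  {within [set t : R | 0 <= t], continuous x2} /\
  (forall t : R, 0 < t ->
     is_derive t 1 x1 (x2 t) /\
     is_derive t 1 x2
       (f (x1 t) (x2 t) (kp *: (ystar - x1 t) + kd *: (- x2 t)))).

From HB Require Import structures.
From mathcomp Require Import all_boot all_order all_algebra.
From mathcomp Require Import all_classical all_reals all_analysis.
From mathcomp Require Import ring lra.
Set Implicit Arguments. Unset Strict Implicit. Unset Printing Implicit Defensive.
Import Order.TTheory GRing.Theory Num.Theory.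
Import numFieldNormedType.Exports.
Local Open Scope classical_set_scope.
Local Open Scope ring_scope.

(* Let z = y* - x1 be the error and w = z' = -x2 its derivative, so that
   w' = -f(x1, x2, u) with u = kp z + kd w = kd (c z + w), c = kp / kd.
   The mean value theorem along the segment from (y*, 0, 0), together with the
   Jacobian bounds, gives
     (c z + w).f >= kd b |c z + w|^2 - |c z + w| (L1 |z| + L2 |w|).
   For V = 2 b kp |z|^2 + 2 c z.w + |w|^2 the cross terms z.w then cancel, so
   V' <= -2 Q(|z|, |w|) for a binary quadratic form Q whose coefficients depend
   only on kp, kd, L1, L2, b.  The two inequalities defining Omega_pd are exactly
   what makes Q, and V itself, positive definite.  Hence V decays exponentially
   along every solution, and so does |z| + |w|. *)

Section EuclideanSpace.
Variables (R : realType) (n : nat).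
Implicit Types (u v w : 'cV[R]_n) (A : 'M[R]_n).

Definition dotv u w : R := (u^T *m w) 0 0.

Lemma dotvE u w : dotv u w = \sum_i u i 0 * w i 0.
Proof. by rewrite /dotv mxE; apply: eq_bigr => i _; rewrite mxE. Qed.

Lemma dotvC u w : dotv u w = dotv w u.
Proof. by rewrite !dotvE; apply: eq_bigr => i _; rewrite mulrC. Qed.

Lemma dotvDr u v w : dotv u (v + w) = dotv u v + dotv u w.
Proof. by rewrite /dotv mulmxDr mxE. Qed.

Lemma dotvDl u v w : dotv (v + w) u = dotv v u + dotv w u.
Proof. by rewrite dotvC dotvDr !(dotvC u). Qed.

Lemma dotvZr (k : R) u w : dotv u (k *: w) = k * dotv u w.
Proof. by rewrite /dotv -scalemxAr mxE. Qed.

Lemma dotvZl (k : R) u w : dotv (k *: u) w = k * dotv u w.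
Proof. by rewrite dotvC dotvZr dotvC. Qed.

Lemma dotvNr u w : dotv u (- w) = - dotv u w.
Proof. by rewrite -scaleN1r dotvZr mulN1r. Qed.

Lemma dotvNl u w : dotv (- u) w = - dotv u w.
Proof. by rewrite dotvC dotvNr dotvC. Qed.

Lemma dotv0r u : dotv u 0 = 0.
Proof. by rewrite /dotv mulmx0 mxE. Qed.

Lemma dotv_ge0 u : 0 <= dotv u u.
Proof. by rewrite dotvE; apply: sumr_ge0 => i _; rewrite -expr2 sqr_ge0. Qed.

Lemma enorm_ge0 u : 0 <= enorm u.
Proof. exact: sqrtr_ge0. Qed.

Lemma sqr_enorm u : enorm u ^+ 2 = dotv u u.
Proof.
rewrite dotvE /enorm sqr_sqrtr; last by apply: sumr_ge0 => i _; rewrite sqr_ge0.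
by apply: eq_bigr => i _; rewrite expr2.
Qed.

Lemma enormN u : enorm (- u) = enorm u.
Proof. by rewrite /enorm; congr Num.sqrt; apply: eq_bigr => i _; rewrite mxE sqrrN. Qed.

Lemma enormZ (k : R) u : enorm (k *: u) = `|k| * enorm u.
Proof.
rewrite /enorm -sqrtr_sqr -sqrtrM ?sqr_ge0 // mulr_sumr; congr Num.sqrt.
by apply: eq_bigr => i _; rewrite mxE exprMn.
Qed.

Lemma enorm0_eq0 u : enorm u = 0 -> u = 0.
Proof.
move=> u0; have /eqP : dotv u u = 0 by rewrite -sqr_enorm u0 expr0n.
rewrite dotvE psumr_eq0 => [/allP u_eq0|i _]; last by rewrite -expr2 sqr_ge0.
apply/matrixP => i j; rewrite ord1 mxE.
by have := u_eq0 i (mem_index_enum _); rewrite /= -expr2 sqrf_eq0 => /eqP.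
Qed.

Lemma cauchy_schwarz u w : dotv u w <= enorm u * enorm w.
Proof.
have [u0|un0] := eqVneq (enorm u) 0; first by rewrite u0 (enorm0_eq0 u0) dotvC dotv0r mul0r.
have [w0|wn0] := eqVneq (enorm w) 0; first by rewrite w0 (enorm0_eq0 w0) dotv0r mulr0.
have uw_gt0 : 0 < enorm u * enorm w by rewrite mulr_gt0 // lt_def ?un0 ?wn0 enorm_ge0.
have := dotv_ge0 (enorm w *: u - enorm u *: w).
rewrite !dotvDl !dotvDr !dotvNl !dotvNr !dotvZl !dotvZr -!sqr_enorm (dotvC w u).
nra.
Qed.

Lemma cauchy_schwarzN u w : - (enorm u * enorm w) <= dotv u w.
Proof. by rewrite lerNl -dotvNl -(enormN u) cauchy_schwarz. Qed.

Lemma enormD_le u w : enorm (u + w) <= enorm u + enorm w.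
Proof.
rewrite -(ler_pXn2r (n := 2)) ?nnegrE ?addr_ge0 ?enorm_ge0 //.
rewrite sqrrD !sqr_enorm dotvDl !dotvDr (dotvC w u).
have := cauchy_schwarz u w; lra.
Qed.

Lemma abs_entry_le_enorm u i : `|u i 0| <= enorm u.
Proof.
rewrite -(sqrtr_sqr (u i 0)) /enorm ler_sqrt; last by apply: sumr_ge0 => j _; rewrite sqr_ge0.
by rewrite (bigD1 i) //= lerDl; apply: sumr_ge0 => j _; rewrite sqr_ge0.
Qed.

Lemma opnorm_has_ubound A :
  has_ubound [set enorm (A *m v) | v in [set v | enorm v <= 1]].
Proof.
exists (Num.sqrt (\sum_i (\sum_j `|A i j|) ^+ 2)) => _ [v /= v1 <-].
rewrite /enorm ler_sqrt; last by apply: sumr_ge0 => i _; rewrite sqr_ge0.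
apply: ler_sum => i _; rewrite -real_normK ?num_real // lerXn2r ?nnegrE ?sumr_ge0 //.
rewrite mxE (le_trans (ler_norm_sum _ _ _)) //; apply: ler_sum => j _.
by rewrite normrM ler_piMr // (le_trans (abs_entry_le_enorm v j)).
Qed.

Lemma enorm_mulmx_le A v : enorm (A *m v) <= opnorm A * enorm v.
Proof.
have [v0|vn0] := eqVneq (enorm v) 0.
  by rewrite v0 (enorm0_eq0 v0) mulmx0 mulr0 -(scale0r 0) enormZ normr0 mul0r.
have v_gt0 : 0 < enorm v by rewrite lt_def vn0 enorm_ge0.
have iv_ge0 : 0 <= (enorm v)^-1 by rewrite invr_ge0 enorm_ge0.
rewrite -ler_pdivrMr // mulrC -(ger0_norm iv_ge0) -enormZ scalemxAr.
apply: (ub_le_sup (opnorm_has_ubound A)); exists ((enorm v)^-1 *: v) => //=.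
by rewrite enormZ ger0_norm // mulVf.
Qed.

Lemma dotv_mulmx_le A (L : R) v w :
  opnorm A <= L -> dotv v (A *m w) <= enorm v * (L * enorm w).
Proof.
move=> AL; rewrite (le_trans (cauchy_schwarz _ _)) // ler_wpM2l ?enorm_ge0 //.
by rewrite (le_trans (enorm_mulmx_le _ _)) // ler_wpM2r ?enorm_ge0.
Qed.

Lemma quad_symm A v : (v^T *m symm A *m v) 0 0 = dotv v (A *m v).
Proof.
rewrite /symm -scalemxAr -scalemxAl mxE mulmxDr mulmxDl mxE /dotv mulmxA.
have -> : (v^T *m A^T *m v) 0 0 = (v^T *m A *m v) 0 0.
  transitivity ((v^T *m A^T *m v)^T 0 0); first by rewrite [RHS]mxE.
  by rewrite !trmx_mul !trmxK mulmxA.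
lra.
Qed.

Lemma loewner_ge_dotv A (b : R) v :
  loewner_ge (symm A) (b *: 1%:M) -> b * dotv v v <= dotv v (A *m v).
Proof.
move=> /(_ v); rewrite mulmxBr mulmxBl mxE quad_symm scalemx1 mul_mx_scalar.
by rewrite mxE -scalemxAl mxE subr_ge0.
Qed.

End EuclideanSpace.

Section Jacobian.
Variables (R : realType) (n : nat).
Local Notation cV := 'cV[R]_n.

Lemma additive_scalable_mulmx (g : cV -> cV) :
  {morph g : y z / y + z} -> (forall (k : R) y, g (k *: y) = k *: g y) ->
  forall x, g x = (\matrix_(i, j) g (evec R j) i 0) *m x.
Proof.
move=> gD gZ x; have g0 : g 0 = 0 by have := gZ 0 0; rewrite !scale0r.
rewrite {1}(matrix_sum_delta x) (big_morph g gD g0).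
apply/matrixP => i k; rewrite ord1 summxE mxE; apply: eq_bigr => j _.
by rewrite big_ord1 gZ !mxE mulrC.
Qed.

Variable f : cV -> cV -> cV -> cV.
Local Notation F := (uncurry3 f).

Lemma derive_uncurry3_jac q d : differentiable F q ->
  'D_d F q = jac_x1 f q *m d.1.1 + jac_x2 f q *m d.1.2 + jac_u f q *m d.2.
Proof.
move=> dF; rewrite deriveE //; set L := 'd F q.
have {1}-> : d = ((d.1.1, 0), 0) + ((0, d.1.2), 0) + ((0, 0), d.2).
  case: d => [[d1 d2] d3].
  by rewrite -[RHS]/((d1 + 0 + 0, 0 + d2 + 0), 0 + 0 + d3) !addr0 !add0r.
rewrite !linearD /=; congr (_ + _ + _).
- rewrite (@additive_scalable_mulmx (fun y => L ((y, 0), 0))).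
  + by congr (_ *m _); apply/matrixP => i j; rewrite !mxE deriveE.
  + by move=> y z; rewrite -linearD -[((y, 0), 0) + _]/((y + z, 0 + 0), 0 + 0) !addr0.
  + by move=> k y; rewrite -linearZ -[k *: ((y, 0), 0)]/((k *: y, k *: 0), k *: 0) !scaler0.
- rewrite (@additive_scalable_mulmx (fun y => L ((0, y), 0))).
  + by congr (_ *m _); apply/matrixP => i j; rewrite !mxE deriveE.
  + by move=> y z; rewrite -linearD -[((0, y), 0) + _]/((0 + 0, y + z), 0 + 0) !addr0.
  + by move=> k y; rewrite -linearZ -[k *: ((0, y), 0)]/((k *: 0, k *: y), k *: 0) !scaler0.
- rewrite (@additive_scalable_mulmx (fun y => L ((0, 0), y))).
  + by congr (_ *m _); apply/matrixP => i j; rewrite !mxE deriveE.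
  + by move=> y z; rewrite -linearD -[((0, 0), y) + _]/((0 + 0, 0 + 0), y + z) !addr0.
  + by move=> k y; rewrite -linearZ -[k *: ((0, 0), y)]/((k *: 0, k *: 0), k *: y) !scaler0.
Qed.

End Jacobian.

Section DotvCalculus.
Variables (R : realType) (n : nat).
Local Notation cV := 'cV[R]_n.

Lemma dotv_sum_entries (X Y : R -> cV) :
  (fun s => dotv (X s) (Y s)) = \sum_(i < n) (fun s => X s i 0 * Y s i 0).
Proof. by rewrite fct_sumE; apply/funext => s; rewrite dotvE. Qed.

Lemma is_derive_entry (X : R -> cV) (t : R) (dX : cV) (i : 'I_n) :
  is_derive t 1 X dX -> is_derive t 1 (fun s => X s i 0) (dX i 0).
Proof.
case=> dXt <-; have := dXt; rewrite derivable_mxP => dXij.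
by apply: DeriveDef; [exact: dXij | rewrite derive_mx // mxE].
Qed.

Lemma is_derive_dotv (X Y : R -> cV) (t : R) (dX dY : cV) :
  is_derive t 1 X dX -> is_derive t 1 Y dY ->
  is_derive t 1 (fun s => dotv (X s) (Y s)) (dotv dX (Y t) + dotv (X t) dY).
Proof.
move=> dXt dYt; rewrite dotv_sum_entries; apply: is_derive_eq.
  apply: is_derive_sum => i.
  exact: is_deriveM (is_derive_entry i dXt) (is_derive_entry i dYt).
rewrite !dotvE -big_split; apply: eq_bigr => i _ /=.
by rewrite addrC; congr (_ + _); exact: mulrC.
Qed.

Lemma within_continuous_dotv (A : set R) (X Y : R -> cV) :
  {within A, continuous X} -> {within A, continuous Y} ->
  {within A, continuous (fun s => dotv (X s) (Y s))}.
Proof.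
move=> cX cY; rewrite dotv_sum_entries => s.
elim/big_ind: _ => [|g h cg ch|i _]; first exact: cst_continuous.
  exact: continuousD.
have entry_cont (Z : R -> cV) :
    {within A, continuous Z} -> {within A, continuous (fun s => Z s i 0)}.
  move=> cZ; apply: (@within_continuous_comp _ _ _ A Z (fun M : cV => M i 0)) => // ? _.
  exact: coord_continuous.
by apply: continuousM; [exact: entry_cont | exact: entry_cont].
Qed.

Lemma mvt_dotv (V : normedModType R) (F : V -> cV) (v : cV) (p d : V) :
  (forall q, differentiable F q) ->
  exists q, dotv v (F (d + p) - F p) = dotv v ('D_d F q).
Proof.
move=> dF; pose G s := F (s *: d + p).
have dG (s : R) : is_derive s 1 G ('D_d F (s *: d + p)).
  have shiftE : (fun h : R => h^-1 *: ((G \o shift s) (h *: 1) - G s)) =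
      (fun h : R => h^-1 *: ((F \o shift (s *: d + p)) (h *: d) - F (s *: d + p))).
    by apply/funext => h; rewrite /G /= [h *: 1]mulr1 scalerDl addrA.
  by apply: DeriveDef; rewrite /derivable /derive shiftE //; exact: diff_derivable.
pose g s := dotv v (G s).
have dg (s : R) : is_derive s 1 g (dotv v ('D_d F (s *: d + p))).
  apply: is_derive_eq; first exact: is_derive_dotv (is_derive_cst v s 1) (dG s).
  by rewrite dotvC dotv0r add0r.
have cg : {within `[0, 1], continuous g}.
  by apply: derivable_within_continuous => s _; exact: (ex_derive (is_derive := dg s)).
have [s _ gs] := MVT ltr01 (fun s _ => dg s) cg.
exists (s *: d + p); rewrite subr0 mulr1 in gs.
by rewrite -gs /g /G scale1r scale0r add0r dotvDr dotvNr.
Qed.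

End DotvCalculus.

Lemma fclass_dotv_ge (R : realType) (n : nat) (L1 L2 b k : R) (ystar : 'cV[R]_n)
    (f : 'cV[R]_n -> 'cV[R]_n -> 'cV[R]_n -> 'cV[R]_n) (z w v : 'cV[R]_n) :
  fclass L1 L2 b ystar f -> 0 <= k ->
  k * b * dotv v v - enorm v * (L1 * enorm z + L2 * enorm w)
    <= dotv v (f (ystar - z) (- w) (k *: v)).
Proof.
move=> [[dF _] [f0 jac_bounds]] k_ge0.
have [[[q1 q2] q3]] := mvt_dotv v ((ystar, 0), 0) ((- z, - w), k *: v) dF.
rewrite derive_uncurry3_jac // /uncurry3 /= f0 subr0 !addr0 [- z + _]addrC => ->.
have [+ [+ +]] := jac_bounds q1 q2 q3.
move: (jac_x1 f _) (jac_x2 f _) (jac_u f _) => J1 J2 J3 J1_le J2_le J3_ge.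
rewrite !dotvDr !mulmxN !dotvNr -scalemxAr dotvZr.
have := dotv_mulmx_le v z J1_le; have := dotv_mulmx_le v w J2_le.
have := ler_wpM2l k_ge0 (loewner_ge_dotv v J3_ge).
lra.
Qed.

Lemma quad_form_ge (R : realFieldType) (p q r x y : R) :
  0 < p -> 0 < r -> q ^+ 2 < 4 * p * r ->
  (4 * p * r - q ^+ 2) / (4 * (p + r)) * (x ^+ 2 + y ^+ 2)
    <= p * x ^+ 2 - q * x * y + r * y ^+ 2.
Proof.
move=> p_gt0 r_gt0 disc.
(* [d] bounds the smallest eigenvalue of the form: the determinant [p r - q^2/4]
   is the product of the eigenvalues and [p + r] bounds the largest one. *)
set d := _ / _.
have d_gt0 : 0 < d by rewrite divr_gt0 //; lra.
have dE : 4 * d * (p + r) = 4 * p * r - q ^+ 2 by rewrite /d; field; lra.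
have pd_gt0 : 0 < p - d.
  have : d * (p + r) < p * (p + r) by nra.
  by rewrite ltr_pM2r //; lra.
have rd : 4 * (p - d) * (r - d) - q ^+ 2 = 4 * d ^+ 2 by nra.
have : 0 <= (2 * (p - d) * x - q * y) ^+ 2 + 4 * d ^+ 2 * y ^+ 2.
  by rewrite addr_ge0 ?sqr_ge0 // mulr_ge0 ?sqr_ge0 // mulr_ge0 ?sqr_ge0.
have -> : (2 * (p - d) * x - q * y) ^+ 2 + 4 * d ^+ 2 * y ^+ 2
    = 4 * (p - d) * (p * x ^+ 2 - q * x * y + r * y ^+ 2 - d * (x ^+ 2 + y ^+ 2)) by nra.
by rewrite pmulr_rge0; lra.
Qed.

Section Lyapunov.
Variables (R : realType) (n : nat).
Local Notation cV := 'cV[R]_n.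
Implicit Types (a c : R) (z w : cV).

Definition lyap a c z w : R := a * dotv z z + 2 * c * dotv z w + dotv w w.

Definition lyap_deriv a c z w (z' w' : cV) : R :=
  2 * (a * dotv z z' + c * (dotv z' w + dotv z w') + dotv w w').

Lemma is_derive_lyap a c (Z W : R -> cV) (t : R) (dZ dW : cV) :
  is_derive t 1 Z dZ -> is_derive t 1 W dW ->
  is_derive t 1 (fun s => lyap a c (Z s) (W s)) (lyap_deriv a c (Z t) (W t) dZ dW).
Proof.
move=> dZt dWt; apply: is_derive_eq.
  apply: is_deriveD; first apply: is_deriveD.
  - exact: (is_deriveZ a (is_derive_dotv dZt dZt)).
  - exact: (is_deriveZ (2 * c) (is_derive_dotv dZt dWt)).
  - exact: (is_derive_dotv dWt dWt).
by rewrite /lyap_deriv (dotvC dZ) (dotvC dW) /GRing.scale /=; ring.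
Qed.

Lemma within_continuous_lyap a c (A : set R) (Z W : R -> cV) :
  {within A, continuous Z} -> {within A, continuous W} ->
  {within A, continuous (fun s => lyap a c (Z s) (W s))}.
Proof.
move=> cZ cW; have cZZ := within_continuous_dotv cZ cZ.
have cZW := within_continuous_dotv cZ cW; have cWW := within_continuous_dotv cW cW.
move=> s; have aZZ := continuousM (@cst_continuous _ _ a s) (cZZ s).
have cZW' := continuousM (@cst_continuous _ _ (2 * c) s) (cZW s).
exact: (continuousD (continuousD aZZ cZW') (cWW s)).
Qed.

Lemma lyap_le a c z w : 0 <= a -> 0 <= c ->
  lyap a c z w <= (a + c + 1) * (enorm z ^+ 2 + enorm w ^+ 2).
Proof.
move=> a_ge0 c_ge0; rewrite /lyap -!sqr_enorm.
have amgm : 2 * (enorm z * enorm w) <= enorm z ^+ 2 + enorm w ^+ 2.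
  by have := sqr_ge0 (enorm z - enorm w); rewrite sqrrB; lra.
have := ler_wpM2l c_ge0 (cauchy_schwarz z w).
have := sqr_ge0 (enorm z); have := sqr_ge0 (enorm w).
nra.
Qed.

Lemma lyap_ge a c z w : 0 <= c -> c ^+ 2 < a ->
  (a - c ^+ 2) / (a + 1) * (enorm z ^+ 2 + enorm w ^+ 2) <= lyap a c z w.
Proof.
move=> c_ge0 ca.
have a_gt0 : 0 < a by apply: le_lt_trans ca; rewrite sqr_ge0.
have := @quad_form_ge _ a (2 * c) 1 (enorm z) (enorm w) a_gt0 ltr01.
have -> : (4 * a * 1 - (2 * c) ^+ 2) / (4 * (a + 1)) = (a - c ^+ 2) / (a + 1).
  by field; lra.
have := ler_wpM2l c_ge0 (cauchy_schwarzN z w).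
rewrite /lyap -!sqr_enorm; lra.
Qed.

End Lyapunov.

Section PDGains.
Variables (R : realType) (L1 L2 b kp kd : R).
Hypotheses (L1_gt0 : 0 < L1) (L2_gt0 : 0 < L2) (b_gt0 : 0 < b).
Hypothesis gains : Omega_pd L1 L2 b kp kd.

Let kp_gt0 : 0 < kp. Proof. by case: gains. Qed.
Let kd_gt0 : 0 < kd. Proof. by case: gains => _ []. Qed.

Let a := 2 * b * kp.
Let c := kp / kd.
Let p := c * (b * kp - L1).
Let q := c * L2 + L1.
Let r := kd * b - c - L2.

Let c_gt0 : 0 < c. Proof. exact: divr_gt0. Qed.
Let c_kd : c * kd = kp. Proof. by rewrite divfK // gt_eqF. Qed.

Lemma lyap_deriv_closed_loop_le n (ystar z w : 'cV[R]_n) f :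
  fclass L1 L2 b ystar f ->
  lyap_deriv a c z w w (- f (ystar - z) (- w) (kp *: z + kd *: w))
    <= - 2 * (p * enorm z ^+ 2 - q * enorm z * enorm w + r * enorm w ^+ 2).
Proof.
move=> hf; have := fclass_dotv_ge z w (c *: z + w) hf (ltW kd_gt0).
rewrite scalerDr scalerA [kd * c]mulrC c_kd; set F := f _ _ _.
have N_le : enorm (c *: z + w) <= c * enorm z + enorm w.
  by apply: (le_trans (enormD_le _ _)); rewrite enormZ ger0_norm // ltW.
have P_ge0 : 0 <= L1 * enorm z + L2 * enorm w.
  by rewrite addr_ge0 // mulr_ge0 ?enorm_ge0 // ltW.
have := ler_wpM2r P_ge0 N_le.
rewrite /lyap_deriv !dotvDl !dotvDr !dotvZl !dotvZr !dotvNr (dotvC w z) -!sqr_enorm.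
rewrite /a /p /q /r -c_kd.
lra.
Qed.

Lemma pd_gains_lyap_posdef : c ^+ 2 < a.
Proof.
have [_ [_ [_ Hk2]]] := gains.
have kbar_gt0 : 0 < kbar L1 L2 b kp kd by rewrite /kbar divr_gt0 ?mulr_gt0 ?addr_gt0.
have : kp < b * kd ^+ 2 by rewrite mulrC -ltr_pdivrMr //; lra.
rewrite -(ltr_pM2l kp_gt0) /c /a expr_div_n ltr_pdivrMr ?exprn_gt0 //.
have := mulr_gt0 kp_gt0 kp_gt0; lra.
Qed.

Lemma pd_gains_dissipative : [/\ 0 < p, 0 < r & q ^+ 2 < 4 * p * r].
Proof.
have [_ [_ [Hk1 Hk2]]] := gains.
rewrite /kbar ltr_pdivrMr // in Hk1; rewrite /kbar -mulrDl ltr_pdivrMr // in Hk2.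
set A := kp * (b * kp - L1); set B := b * kd ^+ 2 - kp - L2 * kd.
set X := kp * L2 + kd * L1.
have pA : p * kd = A by rewrite /p /A mulrAC c_kd.
have rB : r * kd = B by rewrite /r /B !mulrBl c_kd; ring.
have qX : q * kd = X by rewrite /q /X mulrDl mulrAC c_kd; ring.
have X_gt0 : 0 < X by rewrite /X addr_gt0 // mulr_gt0.
have L2kd := mulr_gt0 L2_gt0 kd_gt0; have L1kp := mulr_gt0 L1_gt0 kp_gt0.
have XA : X + L2 * kd < A by rewrite /A /X; lra.
have XB : X + L1 * kp < B by rewrite /B /X; lra.
have p_gt0 : 0 < p by rewrite -(pmulr_lgt0 _ kd_gt0) pA; lra.
have r_gt0 : 0 < r by rewrite -(pmulr_lgt0 _ kd_gt0) rB; lra.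
split => //; rewrite -subr_gt0 -(pmulr_lgt0 _ (exprn_gt0 2 kd_gt0)).
have -> : (4 * p * r - q ^+ 2) * kd ^+ 2 = 4 * (A * B) - X ^+ 2 by rewrite -pA -rB -qX; ring.
have : X * X < A * B by apply: ltr_pM => //; lra.
have := mulr_gt0 X_gt0 X_gt0; rewrite expr2; lra.
Qed.

Lemma pd_common_lyapunov : exists a c mu l u : R, [/\ 0 < mu, 0 < l & 0 < u] /\ [/\
  forall n (z w : 'cV[R]_n), l * (enorm z ^+ 2 + enorm w ^+ 2) <= lyap a c z w,
  forall n (z w : 'cV[R]_n), lyap a c z w <= u * (enorm z ^+ 2 + enorm w ^+ 2) &
  forall n (ystar : 'cV[R]_n) f, fclass L1 L2 b ystar f -> forall z w : 'cV[R]_n,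
    lyap_deriv a c z w w (- f (ystar - z) (- w) (kp *: z + kd *: w))
      <= - mu * lyap a c z w].
Proof.
have [p_gt0 r_gt0 disc] := pd_gains_dissipative; have ca := pd_gains_lyap_posdef.
have a_gt0 : 0 < a by rewrite !mulr_gt0.
set d := (4 * p * r - q ^+ 2) / (4 * (p + r)).
have d_gt0 : 0 < d by rewrite divr_gt0 ?subr_gt0 // mulr_gt0 // addr_gt0.
have u_gt0 : 0 < a + c + 1 by rewrite !addr_gt0.
exists a, c, (2 * d / (a + c + 1)), ((a - c ^+ 2) / (a + 1)), (a + c + 1); split; split => //.
- by rewrite !divr_gt0 // mulr_gt0.
- by rewrite divr_gt0 ?subr_gt0 // addr_gt0.
- by move=> n z w; apply: lyap_ge; rewrite ?ltW.
- by move=> n z w; apply: lyap_le; rewrite ltW.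
move=> n ystar f hf z w.
have := lyap_deriv_closed_loop_le z w hf.
have := quad_form_ge (enorm z) (enorm w) p_gt0 r_gt0 disc; rewrite -/d.
have mu_ge0 : 0 <= 2 * d / (a + c + 1) by rewrite ltW // !divr_gt0 // mulr_gt0.
have := ler_wpM2l mu_ge0 (lyap_le z w (ltW a_gt0) (ltW c_gt0)).
rewrite [2 * d / _ * (_ * _)]mulrA divfK ?gt_eqF //; lra.
Qed.

End PDGains.

Lemma gronwall_exp_decay (R : realType) (V V' : R -> R) (mu : R) :
  {within [set t | 0 <= t], continuous V} ->
  (forall t : R, 0 < t -> is_derive t 1 V (V' t)) ->
  (forall t : R, 0 < t -> V' t <= - mu * V t) ->
  forall t : R, 0 <= t -> V t <= V 0 * expR (- mu * t).
Proof.
move=> cV dV V'_le t t_ge0.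
have dE (s : R) : is_derive s 1 (fun s => expR (mu * s)) (expR (mu * s) * mu).
  apply: (@is_derive1_comp _ expR ( *%R mu)).
  exact: (is_derive_eq (is_deriveZ mu (is_derive_id s 1)) (mulr1 mu)).
pose g s := V s * expR (mu * s).
have dg (s : R) : 0 < s ->
    is_derive s 1 g (V s * (expR (mu * s) * mu) + expR (mu * s) * V' s).
  by move=> s_gt0; exact: is_deriveM (dV s s_gt0) (dE s).
have g'_le0 (s : R) : s \in `]0, +oo[%R -> derive1 g s <= 0.
  rewrite in_itv andbT => s_gt0; rewrite derive1E (derive_val (is_derive := dg s s_gt0)).
  have := ler_wpM2l (ltW (expR_gt0 (mu * s))) (V'_le s s_gt0); nra.
have cg : {within `[0, +oo[, continuous g}.
  have cE : continuous (fun s => expR (mu * s)).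
    move=> s; apply: differentiable_continuous; rewrite -derivable1_diffP.
    exact: (ex_derive (is_derive := dE s)).
  have cE' : {within [set t | 0 <= t], continuous (fun s => expR (mu * s))}.
    exact: continuous_subspaceT.
  by rewrite set_itvcy => s; exact: (continuousM (cV s) (cE' s)).
have dg' (s : R) : s \in `]0, +oo[%R -> derivable g s 1.
  by rewrite in_itv andbT => s_gt0; exact: (ex_derive (is_derive := dg s s_gt0)).
have := ler0_derive1_nincry dg' g'_le0 cg (lexx 0) t_ge0.
rewrite /g mulr0 expR0 mulr1 => gt_le.
by rewrite -[V t]mulr1 -(expRxMexpNx_1 (mu * t)) mulrA mulNr ler_wpM2r // ltW ?expR_gt0.
Qed.

Lemma pd_solution_lyap_decay (R : realType) (n : nat) (kp kd a c mu : R)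
    (ystar : 'cV[R]_n) (f : 'cV[R]_n -> 'cV[R]_n -> 'cV[R]_n -> 'cV[R]_n)
    (x1 x2 : R -> 'cV[R]_n) :
  pd_solution kp kd ystar f x1 x2 ->
  (forall z w : 'cV[R]_n,
    lyap_deriv a c z w w (- f (ystar - z) (- w) (kp *: z + kd *: w))
      <= - mu * lyap a c z w) ->
  forall t : R, 0 <= t ->
    lyap a c (ystar - x1 t) (- x2 t) <= lyap a c (ystar - x1 0) (- x2 0) * expR (- mu * t).
Proof.
move=> [cx1 [cx2 dx]] dissip.
pose F s := f (x1 s) (x2 s) (kp *: (ystar - x1 s) + kd *: - x2 s).
apply: (@gronwall_exp_decay _ (fun s => lyap a c (ystar - x1 s) (- x2 s))
  (fun s => lyap_deriv a c (ystar - x1 s) (- x2 s) (- x2 s) (- F s))).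
- apply: within_continuous_lyap => s.
    exact: (continuousB (@cst_continuous _ _ ystar s) (cx1 s)).
  exact: (continuousN (cx2 s)).
- move=> t /dx[dx1 dx2]; apply: is_derive_lyap.
  by apply: is_derive_eq (is_deriveB (is_derive_cst ystar t 1) dx1) _; rewrite sub0r.
- move=> t _; have := dissip (ystar - x1 t) (- x2 t).
  by rewrite subKr opprK.
Qed.

Lemma sum_le_of_quadratic_sandwich (R : rcfType) (l u e Z W Z0 W0 V V0 : R) :
  0 < l -> 0 < u -> 0 <= e -> 0 <= Z -> 0 <= W -> 0 <= Z0 -> 0 <= W0 ->
  l * (Z ^+ 2 + W ^+ 2) <= V -> V <= V0 * e ^+ 2 -> V0 <= u * (Z0 ^+ 2 + W0 ^+ 2) ->
  Z + W <= Num.sqrt (2 * u / l) * e * (Z0 + W0).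
Proof.
move=> l_gt0 u_gt0 e_ge0 Z_ge0 W_ge0 Z0_ge0 W0_ge0 lV Ve V0u.
have K_ge0 : 0 <= 2 * u / l by rewrite divr_ge0 // ?mulr_ge0 // ltW.
have ZW0_ge0 : 0 <= Z0 + W0 by rewrite addr_ge0.
rewrite -(ler_pXn2r (n := 2)) ?nnegrE ?addr_ge0 ?mulr_ge0 ?sqrtr_ge0 //.
rewrite !exprMn sqr_sqrtr //.
have -> : 2 * u / l * e ^+ 2 * (Z0 + W0) ^+ 2 = 2 * (u * (Z0 + W0) ^+ 2 * e ^+ 2) / l.
  by field; rewrite gt_eqF.
rewrite ler_pdivlMr //.
have : (Z + W) ^+ 2 <= 2 * (Z ^+ 2 + W ^+ 2).
  by have := sqr_ge0 (Z - W); rewrite sqrrB sqrrD; lra.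
move=> /(ler_wpM2r (ltW l_gt0)); rewrite [X in _ <= X]mulrC.
have : Z0 ^+ 2 + W0 ^+ 2 <= (Z0 + W0) ^+ 2.
  by rewrite sqrrD; have := mulr_ge0 Z0_ge0 W0_ge0; lra.
move=> /(ler_wpM2l (ltW u_gt0)) /(ler_wpM2r (sqr_ge0 e)).
have := ler_wpM2r (sqr_ge0 e) V0u.
lra.
Qed.

Theorem theorem3p2 (R : realType) (L1 L2 b kp kd : R) :
  0 < L1 -> 0 < L2 -> 0 < b -> Omega_pd L1 L2 b kp kd ->
  exists M lam : R, 0 < M /\ 0 < lam /\
    forall (n : nat), (0 < n)%N ->
    forall (ystar : 'cV[R]_n)
           (f : 'cV[R]_n -> 'cV[R]_n -> 'cV[R]_n -> 'cV[R]_n),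
      fclass L1 L2 b ystar f ->
    forall x1 x2 : R -> 'cV[R]_n,
      pd_solution kp kd ystar f x1 x2 ->
    forall t : R, 0 <= t ->
      enorm (ystar - x1 t) + enorm (- x2 t)
        <= M * expR (- lam * t) * (enorm (ystar - x1 0) + enorm (- x2 0)).
Proof.
move=> L1_gt0 L2_gt0 b_gt0 gains.
have [a [c [mu [l [u [[mu_gt0 l_gt0 u_gt0] [lyap_lb lyap_ub dissip]]]]]]] :=
  pd_common_lyapunov L1_gt0 L2_gt0 b_gt0 gains.
exists (Num.sqrt (2 * u / l)), (mu / 2); split; last split.
- by rewrite sqrtr_gt0 !divr_gt0 // mulr_gt0.
- by rewrite divr_gt0.
move=> n _ ystar f hf x1 x2 sol t t_ge0.
have decay := pd_solution_lyap_decay sol (dissip n ystar f hf) t_ge0.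
have expE : expR (- mu * t) = expR (- (mu / 2) * t) ^+ 2.
  by rewrite -expRM_natr; congr expR; field.
rewrite expE in decay.
apply: (sum_le_of_quadratic_sandwich l_gt0 u_gt0 _ _ _ _ _
  (lyap_lb _ _ _) decay (lyap_ub _ _ _)); by rewrite ?enorm_ge0.
Qed.
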